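(* Assume the setting below. There exists a constant $C\geq0$ (independent of $h$ and $\Delta x$) such that $$\sup_{n=0,\ldots,N,\ m\in\mathbb Z^d}|\widehat v(t_n,x_m)-V(t_n,x_m)|\leq C\frac{|\Delta x|}{h}.$$
   Context: Let $T>0$, $d,p,q\ge1$, let $A\subseteq\mathbb R^q$ be a compact subset of a separable metric space, and let $\mu:[0,T]\times\mathbb R^d\times A\to\mathbb R^d$, $\sigma:[0,T]\times\mathbb R^d\times A\to\mathbb R^{d\times p}$ be continuous with $|\mu(t,x,a)-\mu(s,y,a)|+\|\sigma(t,x,a)-\sigma(s,y,a)\|\leq C_0(|x-y|+|t-s|^{1/2})$ for all arguments. Let $\psi:\mathbb R^d\to\mathbb R$ be continuous with $|\psi(x)-\psi(y)|\le L|x-y|$. Let $N\ge1$, $h=T/N$, $t_n=nh$. Let $M\ge2$ and $(\hat\lambda_i,\hat\xi_i)_{i=1}^{\hat M}$, $\hat\lambda_i\ge0$, $\hat\xi_i\in\mathbb R^p$, a cubature rule exact for all polynomials of degree $\le2M-1$ with respect to $\mathcal N(0,I_p)$. Define $\widehat v(t_N,\cdot)=\psi$ and $\widehat v(t_n,x)=\sup_{a\in A}\sum_i\hat\lambda_i\widehat v(t_{n+1},x+\mu(t_n,x,a)h+\sqrt h\sigma(t_n,x,a)\hat\xi_i)$ for $n=N-1,\dots,0$, $x\in\mathbb R^d$. Let $\Delta x=(\Delta x_1,\ldots,\Delta x_d)$ with $\Delta x_j>0$, grid $\mathcal G_{\Delta x}=\{x_m=m\Delta x:\ m\in\mathbb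 Z^d\}$ (componentwise product), and let $\mathcal I[\phi]$ be the standard multilinear interpolant of a function $\phi$ on this grid (so $\mathcal I[\phi](x_m)=\phi(x_m)$, $|\mathcal I[\phi](x)-\phi(x)|\le L_\phi|\Delta x|$ for $L_\phi$-Lipschitz $\phi$, and $\phi_1\le\phi_2\Rightarrow\mathcal I[\phi_1]\le\mathcal I[\phi_2]$). Define $V(t_N,x_m)=\psi(x_m)$ and for $n=N-1,\ldots,0$, $m\in\mathbb Z^d$: $V(t_n,x_m)=\sup_{a\in A}\sum_{i=1}^{\hat M}\hat\lambda_i\,\mathcal I[V(t_{n+1},\cdot)]\big(x_m+\mu(t_n,x_m,a)h+\sqrt h\sigma(t_n,x_m,a)\hat\xi_i\big)$. *)

From HB Require Import structures.
From mathcomp Require Import all_boot all_order all_algebra.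
From mathcomp Require Import all_classical all_reals all_analysis.
Set Implicit Arguments. Unset Strict Implicit. Unset Printing Implicit Defensive.
Import Order.TTheory GRing.Theory Num.Theory.
Import numFieldNormedType.Exports.
Local Open Scope classical_set_scope.
Local Open Scope ring_scope.

Definition enorm {R : realType} {d : nat} (v : 'cV[R]_d) : R :=
  Num.sqrt (\sum_(i < d) v i 0 ^+ 2).

Definition fnorm {R : realType} {d p : nat} (M : 'M[R]_(d, p)) : R :=
  Num.sqrt (\sum_(i < d) \sum_(j < p) M i j ^+ 2).

Definition gauss_moment {R : realType} (k : nat) : R :=
  Rintegral (@lebesgue_measure R) setT (fun x : R => x ^+ k * normal_pdf 0 1 x).

(* The cubature rule (lam_i, xi_i)_{i < Mh} on R^p is exact for all polynomials
   of degree <= deg w.r.t. N(0, I_p): by linearity it is enough (and necessary)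
   to be exact on every monomial z^alpha = prod_j z_j^(alpha_j), |alpha| <= deg,
   whose N(0,I_p)-expectation is prod_j E[Z^(alpha_j)], Z ~ N(0,1). *)
Definition cubature_exact {R : realType} (p Mh : nat) (lam : 'I_Mh -> R)
    (xi : 'I_Mh -> 'cV[R]_p) (deg : nat) : Prop :=
  forall alpha : 'I_p -> nat, (\sum_(j < p) alpha j <= deg)%N ->
    \sum_(i < Mh) lam i * \prod_(j < p) (xi i j 0) ^+ (alpha j)
    = \prod_(j < p) gauss_moment (alpha j).

Definition gridpt {R : realType} {d : nat} (dx : 'cV[R]_d) (m : 'I_d -> int)
  : 'cV[R]_d := \col_j ((m j)%:~R * dx j 0).

(* Standard multilinear (Q1) interpolant on the grid of steps dx. *)
Definition interp {R : realType} {d : nat} (dx : 'cV[R]_d)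
    (phi : ('I_d -> int) -> R) (x : 'cV[R]_d) : R :=
  let k := fun j : 'I_d => Num.floor (x j 0 / dx j 0) in
  let s := fun j : 'I_d => x j 0 / dx j 0 - (k j)%:~R in
  \sum_(b : {ffun 'I_d -> bool})
     (\prod_(j < d) (if b j then s j else 1 - s j)) *
     phi (fun j => k j + ((b j : nat) : int))%R.

Definition cstep {R : realType} {d p q Mh : nat}
    (mu : R -> 'cV[R]_d -> 'cV[R]_q -> 'cV[R]_d)
    (sigma : R -> 'cV[R]_d -> 'cV[R]_q -> 'M[R]_(d, p))
    (lam : 'I_Mh -> R) (xi : 'I_Mh -> 'cV[R]_p) (h : R)
    (f : 'cV[R]_d -> R) (t : R) (x : 'cV[R]_d) (a : 'cV[R]_q) : R :=
  \sum_(i < Mh) lam i * f (x + h *: mu t x a + Num.sqrt h *: (sigma t x a *m xi i)).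

(* vhat_rev j = \widehat v(t_{N-j}, .) *)
Fixpoint vhat_rev {R : realType} {d p q Mh : nat} (T : R) (N : nat)
    (A : set 'cV[R]_q)
    (mu : R -> 'cV[R]_d -> 'cV[R]_q -> 'cV[R]_d)
    (sigma : R -> 'cV[R]_d -> 'cV[R]_q -> 'M[R]_(d, p))
    (psi : 'cV[R]_d -> R) (lam : 'I_Mh -> R) (xi : 'I_Mh -> 'cV[R]_p)
    (j : nat) : 'cV[R]_d -> R :=
  match j with
  | 0%N => psi
  | j'.+1 => fun x =>
      let h := T / N%:R in
      sup [set cstep mu sigma lam xi h (vhat_rev T N A mu sigma psi lam xi j')
                     ((N - j'.+1)%:R * h) x a | a in A]
  end.

Definition vhat {R : realType} {d p q Mh : nat} (T : R) (N : nat)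
    (A : set 'cV[R]_q) mu sigma psi (lam : 'I_Mh -> R) (xi : 'I_Mh -> 'cV[R]_p)
    (n : nat) (x : 'cV[R]_d) : R :=
  @vhat_rev R d p q Mh T N A mu sigma psi lam xi (N - n) x.

(* Vgrid_rev j m = V(t_{N-j}, x_m) *)
Fixpoint Vgrid_rev {R : realType} {d p q Mh : nat} (T : R) (N : nat)
    (A : set 'cV[R]_q)
    (mu : R -> 'cV[R]_d -> 'cV[R]_q -> 'cV[R]_d)
    (sigma : R -> 'cV[R]_d -> 'cV[R]_q -> 'M[R]_(d, p))
    (psi : 'cV[R]_d -> R) (lam : 'I_Mh -> R) (xi : 'I_Mh -> 'cV[R]_p)
    (dx : 'cV[R]_d) (j : nat) : ('I_d -> int) -> R :=
  match j with
  | 0%N => fun m => psi (gridpt dx m)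
  | j'.+1 => fun m =>
      let h := T / N%:R in
      sup [set cstep mu sigma lam xi h
                 (interp dx (Vgrid_rev T N A mu sigma psi lam xi dx j'))
                 ((N - j'.+1)%:R * h) (gridpt dx m) a | a in A]
  end.

Definition Vgrid {R : realType} {d p q Mh : nat} (T : R) (N : nat)
    (A : set 'cV[R]_q) mu sigma psi (lam : 'I_Mh -> R) (xi : 'I_Mh -> 'cV[R]_p)
    (dx : 'cV[R]_d) (n : nat) (m : 'I_d -> int) : R :=
  @Vgrid_rev R d p q Mh T N A mu sigma psi lam xi dx (N - n) m.

(* Both schemes iterate the same operator "average over the cubature nodes,
   then take the sup over the controls"; the grid scheme additionally
   interpolates before each step.  Since the rule reproduces the Gaussian
   moments of order <= 2, one step maps an L-Lipschitz function to an
   L (1 + K h)-Lipschitz one, so every vhat(t_n, .) is Lipschitz with constant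
   at most L e^{KT}.  Averaging and sup are 1-Lipschitz for the sup norm and
   interpolating an L e^{KT}-Lipschitz function costs at most L e^{KT} |dx|,
   so after N = T/h steps the two schemes differ by at most T L e^{KT} |dx| / h. *)

From HB Require Import structures.
From mathcomp Require Import all_boot all_order all_algebra.
From mathcomp Require Import all_classical all_reals all_analysis.
From mathcomp Require Import zify ring lra.
Import Order.TTheory GRing.Theory Num.Theory.
Import numFieldNormedType.Exports.
Local Open Scope classical_set_scope.
Local Open Scope ring_scope.

Section GaussMoments.
Variable R : realType.
Local Notation mu := (@lebesgue_measure R).

Lemma Rintegral_odd (f : R -> R) : continuous f ->
  (forall x, f (- x) = - f x) -> (forall x, 0 <= x -> 0 <= f x) ->
  Rintegral mu setT f = 0.
Proof.
move=> cf fN f_ge0.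
set c := (\int[mu]_(x in `[0%R, +oo[) (f x)%:E)%E.
have f_le0 x : x <= 0 -> f x <= 0.
  by move=> x0; rewrite -[x]opprK fN oppr_le0 f_ge0 // oppr_ge0.
have pos_part : (\int[mu]_x ((EFin \o f)^\+ x) = c)%E.
  rewrite /c integral_mkcond [RHS]integral_mkcond; apply: eq_integral => x _.
  rewrite /patch /= funeposE in_setT mem_setE in_itv /= andbT.
  case: leP => [x0|x0]; first by rewrite max_l // lee_fin f_ge0.
  by rewrite max_r // lee_fin f_le0 // ltW.
have neg_part : (\int[mu]_x ((EFin \o f)^\- x) = c)%E.
  transitivity (\int[mu]_(x in `]-oo, (- 0)%R]) ((- f x)%:E))%E.
    rewrite integral_mkcond [RHS]integral_mkcond; apply: eq_integral => x _.
    rewrite /patch /= funenegE oppr0 in_setT mem_setE in_itv /=.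
    case: leP => [x0|x0]; last by rewrite max_r // lee_fin oppr_le0 f_ge0 // ltW.
    by rewrite max_l // lee_fin oppr_ge0 f_le0.
  rewrite ge0_integration_by_substitutionNy.
  - by apply: eq_integral => x _; rewrite /= fN opprK.
  - by apply: continuous_subspaceT => x; apply: continuousN; apply: cf.
  - by move=> x; rewrite in_itv /= oppr0 => /ltW /f_le0; rewrite oppr_ge0.
(* No integrability is needed: if [c] is infinite, [fine] sends [c - c] to [0]. *)
rewrite /Rintegral integralE pos_part neg_part.
by case: (c) => [r||] //=; rewrite subrr.
Qed.

Lemma gauss_moment0 : gauss_moment 0 = 1 :> R.
Proof.
rewrite /gauss_moment /Rintegral.
under eq_integral do rewrite expr0 mul1r.
by rewrite integral_normal_pdf.
Qed.

Lemma gauss_moment1 : gauss_moment 1 = 0 :> R.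
Proof.
have pdf_cont : continuous (normal_pdf (0 : R) 1).
  by apply: continuous_normal_pdf; rewrite oner_eq0.
apply: Rintegral_odd => [|x|x x0].
- by move=> x; exact: (continuousM (@exprn_continuous R 1 x) (pdf_cont x)).
- by rewrite /normal_pdf oner_eq0 /normal_fun !subr0 sqrrN !expr1 mulNr.
- by rewrite expr1 mulr_ge0 ?normal_pdf_ge0.
Qed.

End GaussMoments.

Section CubatureMoments.
Context {R : realType} {p Mh deg : nat} {lam : 'I_Mh -> R} {xi : 'I_Mh -> 'cV[R]_p}.
Hypothesis xi_exact : cubature_exact lam xi deg.
Hypothesis deg_ge2 : (2 <= deg)%N.

Lemma prodr_exp_eq (y : 'I_p -> R) k : \prod_(j < p) y j ^+ (j == k) = y k.
Proof.
rewrite (bigD1 k) //= eqxx expr1 big1 ?mulr1 // => j /negbTE ->.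
by rewrite expr0.
Qed.

Lemma sumn_eq (k : 'I_p) : (\sum_(j < p) (j == k) = 1)%N.
Proof. by rewrite (bigD1 k) //= eqxx big1 // => j /negbTE ->. Qed.

Lemma cubature_sum1 : \sum_(i < Mh) lam i = 1.
Proof.
have := xi_exact (fun _ => 0%N); rewrite big1 // => /(_ isT).
under eq_bigr do rewrite big1 ?mulr1 //.
by move=> ->; rewrite big1 // => j _; exact: gauss_moment0.
Qed.

Lemma cubature_mean0 k : \sum_(i < Mh) lam i * xi i k 0 = 0.
Proof.
have := xi_exact (fun j => (j == k) : nat); rewrite sumn_eq.
move=> /(_ (ltnW deg_ge2)).
under eq_bigr do rewrite prodr_exp_eq.
by move=> ->; rewrite (bigD1 k) //= eqxx gauss_moment1 mul0r.
Qed.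

Lemma cubature_covariance k l :
  \sum_(i < Mh) lam i * (xi i k 0 * xi i l 0)
  = if k == l then gauss_moment 2 else 0.
Proof.
have := xi_exact (fun j => ((j == k) : nat) + (j == l))%N.
rewrite big_split /= !sumn_eq => /(_ deg_ge2).
under eq_bigr do under eq_bigr do rewrite exprD.
under eq_bigr do rewrite big_split /= !prodr_exp_eq.
move=> ->; case: eqP => [<-|/eqP kl].
  rewrite (bigD1 k) //= eqxx big1 ?mulr1 // => j /negbTE ->.
  exact: gauss_moment0.
by rewrite (bigD1 k) //= eqxx (negbTE kl) addn0 gauss_moment1 mul0r.
Qed.

End CubatureMoments.

Section ConvexCombination.
Context {R : realFieldType} {I : finType} {w : I -> R}.
Hypothesis w_ge0 : forall i, 0 <= w i.

Lemma ler_norm_wsumB (f g : I -> R) :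
  `|\sum_i w i * f i - \sum_i w i * g i| <= \sum_i w i * `|f i - g i|.
Proof.
rewrite -sumrB; apply: le_trans (ler_norm_sum _ _ _) _.
by apply: ler_sum => i _; rewrite -mulrBr normrM ger0_norm.
Qed.

Hypothesis w_sum1 : \sum_i w i = 1.

Lemma wsum_cst c : \sum_i w i * c = c.
Proof. by rewrite -mulr_suml w_sum1 mul1r. Qed.

Lemma wsum_dist_le (f g : I -> R) c : (forall i, `|f i - g i| <= c) ->
  `|\sum_i w i * f i - \sum_i w i * g i| <= c.
Proof.
move=> fg; apply: le_trans (ler_norm_wsumB f g) _.
by rewrite -[leRHS]wsum_cst; apply: ler_sum => i _; rewrite ler_wpM2l.
Qed.

Lemma sqr_wsum_le (a : I -> R) :
  (\sum_i w i * a i) ^+ 2 <= \sum_i w i * a i ^+ 2.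
Proof.
have expand m : \sum_i w i * (a i - m) ^+ 2
    = \sum_i w i * a i ^+ 2 - 2 * m * (\sum_i w i * a i) + m ^+ 2 * \sum_i w i.
  rewrite !mulr_sumr -sumrB -big_split /=.
  by apply: eq_bigr => i _; ring.
have := expand (\sum_i w i * a i); rewrite w_sum1.
have : 0 <= \sum_i w i * (a i - \sum_i w i * a i) ^+ 2.
  by apply: sumr_ge0 => i _; rewrite mulr_ge0 ?sqr_ge0.
move: (\sum_i w i * a i) => m; lra.
Qed.

Lemma wsum_le_of_sqr (a : I -> R) B : (forall i, 0 <= a i) -> 0 <= B ->
  \sum_i w i * a i ^+ 2 <= B ^+ 2 -> \sum_i w i * a i <= B.
Proof.
move=> a_ge0 B_ge0 sqr_le.
have := le_trans (sqr_wsum_le a) sqr_le.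
by rewrite ler_pXn2r ?nnegrE // sumr_ge0 // => i _; rewrite mulr_ge0.
Qed.

End ConvexCombination.

Section Norms.
Context {R : realType}.

Lemma enorm_ge0 {d} (v : 'cV[R]_d) : 0 <= enorm v.
Proof. exact: sqrtr_ge0. Qed.

Lemma fnorm_ge0 {d p} (S : 'M[R]_(d, p)) : 0 <= fnorm S.
Proof. exact: sqrtr_ge0. Qed.

Lemma sqr_enorm {d} (v : 'cV[R]_d) : enorm v ^+ 2 = \sum_(k < d) v k 0 ^+ 2.
Proof. by rewrite sqr_sqrtr // sumr_ge0 // => k _; rewrite sqr_ge0. Qed.

Lemma sqr_fnorm {d p} (S : 'M[R]_(d, p)) :
  fnorm S ^+ 2 = \sum_(k < d) \sum_(j < p) S k j ^+ 2.
Proof.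
rewrite sqr_sqrtr // sumr_ge0 // => k _.
by rewrite sumr_ge0 // => j _; rewrite sqr_ge0.
Qed.

Lemma sqr_enormDZ_le {d} [h : R] (u v : 'cV[R]_d) : 0 <= h ->
  enorm (u + h *: v) ^+ 2 <= (1 + h) * enorm u ^+ 2 + (h + h ^+ 2) * enorm v ^+ 2.
Proof.
move=> h_ge0; rewrite !sqr_enorm !mulr_sumr -big_split /=.
apply: ler_sum => k _; rewrite !mxE.
have : 0 <= h * (u k 0 - v k 0) ^+ 2 by rewrite mulr_ge0 ?sqr_ge0.
rewrite !expr2; nra.
Qed.

End Norms.

Section CubatureStep.
Context {R : realType} {p Mh : nat} {lam : 'I_Mh -> R} {xi : 'I_Mh -> 'cV[R]_p} {c2 : R}.
Hypothesis lam_ge0 : forall i, 0 <= lam i.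
Hypothesis lam_sum1 : \sum_(i < Mh) lam i = 1.
Hypothesis xi_mean0 : forall k, \sum_(i < Mh) lam i * xi i k 0 = 0.
Hypothesis xi_cov : forall k l,
  \sum_(i < Mh) lam i * (xi i k 0 * xi i l 0) = if k == l then c2 else 0.

Lemma cubature_mean_linear (a : 'I_p -> R) :
  \sum_(i < Mh) lam i * (\sum_(j < p) a j * xi i j 0) = 0.
Proof.
under eq_bigr do rewrite mulr_sumr.
rewrite exchange_big /= big1 // => j _.
under eq_bigr do rewrite mulrCA.
by rewrite -mulr_sumr xi_mean0 mulr0.
Qed.

Lemma cubature_mean_quadratic (a : 'I_p -> R) :
  \sum_(i < Mh) lam i * (\sum_(j < p) a j * xi i j 0) ^+ 2
  = c2 * \sum_(j < p) a j ^+ 2.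
Proof.
transitivity (\sum_(j < p) \sum_(l < p) a j * a l *
    \sum_(i < Mh) lam i * (xi i j 0 * xi i l 0)).
  under eq_bigr do rewrite expr2 mulr_suml mulr_sumr.
  under eq_bigr do under eq_bigr do rewrite mulr_sumr.
  rewrite exchange_big /=; apply: eq_bigr => j _.
  under eq_bigr do rewrite mulr_sumr.
  rewrite exchange_big /=; apply: eq_bigr => l _.
  by rewrite mulr_sumr; apply: eq_bigr => i _; ring.
rewrite mulr_sumr; apply: eq_bigr => j _.
under eq_bigr do rewrite xi_cov.
rewrite (bigD1 j) //= eqxx big1 ?addr0; first by ring.
by move=> l /negbTE; rewrite eq_sym => ->; rewrite mulr0.
Qed.

Lemma cubature_mean_sqr_enorm {d} (u : 'cV[R]_d) (S : 'M[R]_(d, p)) (s : R) :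
  \sum_(i < Mh) lam i * enorm (u + s *: (S *m xi i)) ^+ 2
  = enorm u ^+ 2 + s ^+ 2 * c2 * fnorm S ^+ 2.
Proof.
rewrite sqr_fnorm !sqr_enorm.
under eq_bigr do rewrite sqr_enorm mulr_sumr.
rewrite exchange_big /= mulr_sumr -big_split /=; apply: eq_bigr => k _.
transitivity (u k 0 ^+ 2 * \sum_(i < Mh) lam i
   + 2 * s * u k 0 * \sum_(i < Mh) lam i * (\sum_(j < p) S k j * xi i j 0)
   + s ^+ 2 * \sum_(i < Mh) lam i * (\sum_(j < p) S k j * xi i j 0) ^+ 2).
  rewrite !mulr_sumr -!big_split /=; apply: eq_bigr => i _.
  by rewrite !mxE; ring.
by rewrite cubature_mean_linear cubature_mean_quadratic lam_sum1; ring.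
Qed.

Context {h C0 K : R}.
Hypothesis h_ge0 : 0 <= h.
Hypothesis K_ge : 1 + C0 ^+ 2 + h * C0 ^+ 2 + `|c2| * C0 ^+ 2 <= K.

Lemma step_growth_ge0 : 0 <= h * K.
Proof.
apply: mulr_ge0 => //; apply: le_trans K_ge.
have := sqr_ge0 C0; have : 0 <= h * C0 ^+ 2 by rewrite mulr_ge0 ?sqr_ge0.
have : 0 <= `|c2| * C0 ^+ 2 by rewrite mulr_ge0 ?sqr_ge0.
lra.
Qed.

Lemma cubature_mean_enorm_le {d} (u v : 'cV[R]_d) (S : 'M[R]_(d, p)) :
  enorm v + fnorm S <= C0 * enorm u ->
  \sum_(i < Mh) lam i * enorm (u + h *: v + Num.sqrt h *: (S *m xi i))
  <= (1 + h * K) * enorm u.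
Proof.
set e := enorm u; set V := enorm v; set F := fnorm S => vS_le.
have e_ge0 : 0 <= e := enorm_ge0 u.
have V_ge0 : 0 <= V := enorm_ge0 v.
have F_ge0 : 0 <= F := fnorm_ge0 S.
have hK := step_growth_ge0.
(* Jensen reduces the mean of the norms to the mean of their squares, which the
   first two moments of the rule compute exactly. *)
apply: wsum_le_of_sqr => //; first by move=> i; exact: enorm_ge0.
  by rewrite mulr_ge0 // addr_ge0.
rewrite cubature_mean_sqr_enorm (sqr_sqrtr h_ge0) -/F.
have uv_le := sqr_enormDZ_le u v h_ge0; rewrite -/e -/V in uv_le.
have V_le : V <= C0 * e by lra.
have F_le : F <= C0 * e by lra.
have V2 : V ^+ 2 <= (C0 * e) ^+ 2 by rewrite !expr2; nra.
have F2 : c2 * F ^+ 2 <= `|c2| * (C0 * e) ^+ 2.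
  apply: le_trans (_ : `|c2| * F ^+ 2 <= _).
    by rewrite ler_wpM2r ?sqr_ge0 ?ler_norm.
  by rewrite ler_wpM2l // !expr2; nra.
have drift_le : (h + h ^+ 2) * V ^+ 2 <= (h + h ^+ 2) * (C0 * e) ^+ 2.
  by rewrite ler_wpM2l // addr_ge0 // sqr_ge0.
have diffusion_le : h * (c2 * F ^+ 2) <= h * (`|c2| * (C0 * e) ^+ 2) by rewrite ler_wpM2l.
have rate_le : e ^+ 2 * (h * (1 + C0 ^+ 2 + h * C0 ^+ 2 + `|c2| * C0 ^+ 2))
    <= e ^+ 2 * (h * K).
  by rewrite ler_wpM2l ?sqr_ge0 // ler_wpM2l.
have slack_ge0 : 0 <= e ^+ 2 * (h * K) * (h * K) by rewrite mulr_ge0 // mulr_ge0 ?sqr_ge0.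
rewrite -mulrA; move: drift_le diffusion_le rate_le slack_ge0 uv_le; rewrite !expr2; nra.
Qed.

Lemma cubature_step_lipschitz {d} (f : 'cV[R]_d -> R) (Lf : R)
    (x y mx my : 'cV[R]_d) (Sx Sy : 'M[R]_(d, p)) :
  0 <= Lf -> (forall z w, `|f z - f w| <= Lf * enorm (z - w)) ->
  enorm (mx - my) + fnorm (Sx - Sy) <= C0 * enorm (x - y) ->
  `|\sum_(i < Mh) lam i * f (x + h *: mx + Num.sqrt h *: (Sx *m xi i))
    - \sum_(i < Mh) lam i * f (y + h *: my + Num.sqrt h *: (Sy *m xi i))|
  <= Lf * (1 + h * K) * enorm (x - y).
Proof.
move=> Lf_ge0 f_lip coef_lip.
apply: le_trans (ler_norm_wsumB lam_ge0 _ _) _.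
have mean_le := cubature_mean_enorm_le _ _ _ coef_lip.
rewrite -mulrA; apply: le_trans _ (ler_wpM2l Lf_ge0 mean_le).
rewrite mulr_sumr ler_sum // => i _; rewrite mulrCA ler_wpM2l //.
have -> : Num.sqrt h *: ((Sx - Sy) *m xi i)
    = Num.sqrt h *: (Sx *m xi i) - Num.sqrt h *: (Sy *m xi i).
  by rewrite mulmxBl scalerBr.
rewrite scalerBr (addrACA x) -opprD (addrACA (x + _)) -opprD.
exact: f_lip.
Qed.

End CubatureStep.

Section SupImage.
Context {R : realType} {Q : Type}.
Variables (A : set Q) (c : R).
Hypothesis c_ge0 : 0 <= c.

Lemma sup_image_le_add [F G : Q -> R] : (forall a, A a -> F a <= G a + c) ->
  (forall a, A a -> G a <= F a + c) ->
  sup [set F a | a in A] <= sup [set G a | a in A] + c.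
Proof.
move=> FG GF.
have [[a0 Aa0]|A0] := pselect (A !=set0); last first.
  have -> : A = set0 by apply/seteqP; split=> // a Aa; apply: A0; exists a.
  by rewrite !image_set0 sup0 add0r.
have [[B GB]|G_unbdd] := pselect (has_ubound [set G a | a in A]).
  apply: ge_sup; first by exists (F a0), a0.
  move=> _ [a Aa <-]; apply: le_trans (FG a Aa) _; rewrite lerD2r.
  by apply: ub_le_sup; [exists B | exists a].
(* Otherwise both suprema are the junk value [0]. *)
have F_unbdd : ~ has_ubound [set F a | a in A].
  move=> [B FB]; apply: G_unbdd; exists (B + c) => _ [a Aa <-].
  by apply: le_trans (GF a Aa) _; rewrite lerD2r; apply: FB; exists a.
by rewrite !sup_out ?add0r // => -[].
Qed.

Lemma sup_image_dist_le (F G : Q -> R) : (forall a, A a -> `|F a - G a| <= c) ->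
  `|sup [set F a | a in A] - sup [set G a | a in A]| <= c.
Proof.
move=> FG_le.
have FG a : A a -> F a <= G a + c.
  by move=> /FG_le; rewrite ler_norml; lra.
have GF a : A a -> G a <= F a + c.
  by move=> /FG_le; rewrite ler_norml; lra.
have := sup_image_le_add FG GF; have := sup_image_le_add GF FG.
by rewrite ler_norml; lra.
Qed.

End SupImage.

Section Interpolation.
Context {R : realType} {d : nat}.
Variable dx : 'cV[R]_d.

Definition cell_index (x : 'cV[R]_d) j := Num.floor (x j 0 / dx j 0).
Definition cell_coord (x : 'cV[R]_d) j := x j 0 / dx j 0 - (cell_index x j)%:~R.
Definition cell_corner (x : 'cV[R]_d) (b : {ffun 'I_d -> bool}) j :=
  (cell_index x j + (b j : nat)%:Z)%R.
Definition interp_weight (x : 'cV[R]_d) (b : {ffun 'I_d -> bool}) :=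
  \prod_(j < d) (if b j then cell_coord x j else 1 - cell_coord x j).

Lemma interpE (phi : ('I_d -> int) -> R) x :
  interp dx phi x = \sum_b interp_weight x b * phi (cell_corner x b).
Proof. by []. Qed.

Lemma cell_coord_itv x j : 0 <= cell_coord x j < 1.
Proof.
rewrite /cell_coord /cell_index.
have /andP[] := floor_itv (x j 0 / dx j 0); rewrite intrD1 => lb ub.
by apply/andP; split; lra.
Qed.

Lemma interp_weight_ge0 x b : 0 <= interp_weight x b.
Proof.
apply: prodr_ge0 => j _; have /andP[lb ub] := cell_coord_itv x j.
by case: (b j); lra.
Qed.

Lemma interp_weight_sum1 x : \sum_b interp_weight x b = 1.
Proof.
rewrite /interp_weight -(bigA_distr_bigA (fun j (b : bool) =>
  if b then cell_coord x j else 1 - cell_coord x j)).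
by rewrite big1 // => j _; rewrite big_bool /= addrC subrK.
Qed.

Lemma interp_dist_le [phi1 phi2 : ('I_d -> int) -> R] [c : R] x :
  (forall m, `|phi1 m - phi2 m| <= c) ->
  `|interp dx phi1 x - interp dx phi2 x| <= c.
Proof.
move=> phi12; rewrite !interpE.
exact: (wsum_dist_le (interp_weight_ge0 x) (interp_weight_sum1 x)).
Qed.

Hypothesis dx_gt0 : forall j, 0 < dx j 0.

Lemma enorm_cell_corner_le x b : enorm (gridpt dx (cell_corner x b) - x) <= enorm dx.
Proof.
rewrite /enorm ler_sqrt; last by rewrite sumr_ge0 // => j _; rewrite sqr_ge0.
apply: ler_sum => j _; rewrite !mxE /cell_corner intrD.
have /andP[lb ub] := cell_coord_itv x j.
have xE : x j 0 = ((cell_index x j)%:~R + cell_coord x j) * dx j 0.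
  by rewrite /cell_coord addrC subrK mulfVK // gt_eqF.
rewrite xE -mulrBl opprD addrACA subrr add0r exprMn ler_piMl ?sqr_ge0 //.
by case: (b j); rewrite /= ?mulr1z ?mulr0z !expr2; nra.
Qed.

Lemma interp_error_le [phi : 'cV[R]_d -> R] [Lp : R] x : 0 <= Lp ->
  (forall z w, `|phi z - phi w| <= Lp * enorm (z - w)) ->
  `|interp dx (fun m => phi (gridpt dx m)) x - phi x| <= Lp * enorm dx.
Proof.
move=> Lp_ge0 phi_lip.
rewrite interpE -[phi x](wsum_cst (interp_weight_sum1 x)).
apply: (wsum_dist_le (interp_weight_ge0 x) (interp_weight_sum1 x)) => b.
apply: le_trans (phi_lip _ _) _.
by rewrite ler_wpM2l // enorm_cell_corner_le.
Qed.

End Interpolation.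

Lemma expr1D_le_expR (R : realType) (x : R) (j n : nat) : 0 <= x -> (j <= n)%N ->
  (1 + x) ^+ j <= expR (n%:R * x).
Proof.
move=> x_ge0 jn; apply: le_trans (_ : (1 + x) ^+ n <= _).
  by rewrite ler_weXn2l // lerDl.
by rewrite expRM_natl lerXn2r ?nnegrE ?expR_ge0 ?addr_ge0 ?expR_ge1Dx.
Qed.

Section SchemeStability.
Context {R : realType} {d p q Mh : nat} {T : R} {N : nat} {A : set 'cV[R]_q}.
Context {mu : R -> 'cV[R]_d -> 'cV[R]_q -> 'cV[R]_d}.
Context {sigma : R -> 'cV[R]_d -> 'cV[R]_q -> 'M[R]_(d, p)}.
Context {psi : 'cV[R]_d -> R} {lam : 'I_Mh -> R} {xi : 'I_Mh -> 'cV[R]_p}.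
Context {C0 L c2 K : R}.
Hypothesis T_gt0 : 0 < T.
Hypothesis N_gt0 : (0 < N)%N.
Hypothesis lam_ge0 : forall i, 0 <= lam i.
Hypothesis lam_sum1 : \sum_(i < Mh) lam i = 1.
Hypothesis xi_mean0 : forall k, \sum_(i < Mh) lam i * xi i k 0 = 0.
Hypothesis xi_cov : forall k l,
  \sum_(i < Mh) lam i * (xi i k 0 * xi i l 0) = if k == l then c2 else 0.
Hypothesis coef_lip : forall t x y a, 0 <= t <= T -> A a ->
  enorm (mu t x a - mu t y a) + fnorm (sigma t x a - sigma t y a)
  <= C0 * enorm (x - y).
Hypothesis L_ge0 : 0 <= L.
Hypothesis psi_lip : forall x y, `|psi x - psi y| <= L * enorm (x - y).
Hypothesis K_ge : 1 + C0 ^+ 2 + T / N%:R * C0 ^+ 2 + `|c2| * C0 ^+ 2 <= K.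

Local Notation h := (T / N%:R).
Local Notation vr := (vhat_rev T N A mu sigma psi lam xi).

Lemma time_step_gt0 : 0 < h.
Proof. by rewrite divr_gt0 ?ltr0n. Qed.

Let hK_ge0 : 0 <= h * K := step_growth_ge0 (ltW time_step_gt0) K_ge.

Lemma natr_mul_time_step : N%:R * h = T.
Proof. by rewrite mulrC divfK // pnatr_eq0 -lt0n. Qed.

Lemma grid_time_itv j : 0 <= (N - j.+1)%:R * h <= T.
Proof.
have h_gt0 := time_step_gt0.
apply/andP; split; first by rewrite mulr_ge0 ?ler0n ?ltW.
by rewrite -[leRHS]natr_mul_time_step ler_pM2r // ler_nat leq_subr.
Qed.

Lemma vhat_rev_lipschitz j x y :
  `|vr j x - vr j y| <= L * (1 + h * K) ^+ j * enorm (x - y).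
Proof.
have h_ge0 := ltW time_step_gt0.
elim: j x y => [|j IH] x y /=; first by rewrite expr0 mulr1.
apply: sup_image_dist_le => [|a Aa].
  by rewrite !mulr_ge0 ?enorm_ge0 ?exprn_ge0 ?addr_ge0.
have -> : L * (1 + h * K) ^+ j.+1 = L * (1 + h * K) ^+ j * (1 + h * K).
  by rewrite exprSr mulrA.
apply: (cubature_step_lipschitz lam_ge0 lam_sum1 xi_mean0 xi_cov h_ge0 K_ge).
- by rewrite mulr_ge0 ?exprn_ge0 ?addr_ge0.
- exact: IH.
- exact: coef_lip (grid_time_itv j) Aa.
Qed.

Lemma lipschitz_growth_le [j : nat] : (j <= N)%N ->
  L * (1 + h * K) ^+ j <= L * expR (K * T).
Proof.
move=> jN; apply: ler_wpM2l => //.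
have -> : K * T = N%:R * (h * K) by rewrite mulrA natr_mul_time_step mulrC.
exact: expr1D_le_expR hK_ge0 jN.
Qed.

Variable dx : 'cV[R]_d.
Hypothesis dx_gt0 : forall j, 0 < dx j 0.
Local Notation Vr := (Vgrid_rev T N A mu sigma psi lam xi dx).

(* Averaging and [sup] do not amplify errors, so each step only adds the
   interpolation error of a function whose Lipschitz constant is at most
   [L * expR (K * T)]. *)
Lemma vhat_Vgrid_rev_error j : (j <= N)%N -> forall m,
  `|vr j (gridpt dx m) - Vr j m| <= j%:R * (L * expR (K * T)) * enorm dx.
Proof.
elim: j => [|j IH] jN m /=; first by rewrite subrr normr0 !mul0r.
have Lmax_ge0 : 0 <= L * expR (K * T) by rewrite mulr_ge0 ?expR_ge0.
apply: sup_image_dist_le => [|a Aa]; first by rewrite !mulr_ge0 ?enorm_ge0.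
apply: (wsum_dist_le lam_ge0 lam_sum1) => i.
set z := (_ + _ + _).
have Lj_ge0 : 0 <= L * (1 + h * K) ^+ j.
  by rewrite mulr_ge0 ?exprn_ge0 ?addr_ge0.
have interp_err := interp_error_le dx dx_gt0 z Lj_ge0 (vhat_rev_lipschitz j).
have prop_err := interp_dist_le dx z (IH (ltnW jN)).
have growth := ler_wpM2r (enorm_ge0 dx) (lipschitz_growth_le (ltnW jN)).
rewrite -natr1 mulrDl mul1r mulrDl.
apply: le_trans (ler_distD (interp dx (fun m => vr j (gridpt dx m)) z) _ _) _.
rewrite distrC in interp_err; lra.
Qed.

End SchemeStability.

Theorem proposition3p4 (R : realType) (T : R) (d p q : nat)
    (A : set 'cV[R]_q)
    (mu : R -> 'cV[R]_d -> 'cV[R]_q -> 'cV[R]_d)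
    (sigma : R -> 'cV[R]_d -> 'cV[R]_q -> 'M[R]_(d, p))
    (C0 L : R) (psi : 'cV[R]_d -> R)
    (M Mh : nat) (lam : 'I_Mh -> R) (xi : 'I_Mh -> 'cV[R]_p) :
  0 < T -> (1 <= d)%N -> (1 <= p)%N -> (1 <= q)%N ->
  compact A ->
  {within [set z : R * 'cV[R]_d * 'cV[R]_q | 0 <= z.1.1 <= T /\ A z.2],
     continuous (fun z : R * 'cV[R]_d * 'cV[R]_q => mu z.1.1 z.1.2 z.2)} ->
  {within [set z : R * 'cV[R]_d * 'cV[R]_q | 0 <= z.1.1 <= T /\ A z.2],
     continuous (fun z : R * 'cV[R]_d * 'cV[R]_q => sigma z.1.1 z.1.2 z.2)} ->
  (forall t s x y a, 0 <= t <= T -> 0 <= s <= T -> A a ->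
     enorm (mu t x a - mu s y a) + fnorm (sigma t x a - sigma s y a)
     <= C0 * (enorm (x - y) + Num.sqrt `|t - s|)) ->
  continuous psi ->
  (forall x y, `|psi x - psi y| <= L * enorm (x - y)) ->
  (2 <= M)%N ->
  (forall i, 0 <= lam i) ->
  cubature_exact lam xi (2 * M - 1) ->
  exists C : R, 0 <= C /\
    forall (N : nat) (dx : 'cV[R]_d), (1 <= N)%N -> (forall j, 0 < dx j 0) ->
      forall (n : nat) (m : 'I_d -> int), (n <= N)%N ->
        `|vhat T N A mu sigma psi lam xi n (gridpt dx m)
          - Vgrid T N A mu sigma psi lam xi dx n m|
        <= C * enorm dx / (T / N%:R).
Proof.
(* Only the Lipschitz bounds in space matter. *)
move=> T_gt0 _ _ _ _ _ _ coef_holder _ psi_lip M_ge2 lam_ge0 xi_exact.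
have deg_ge2 : (2 <= 2 * M - 1)%N by lia.
have lam_sum1 := cubature_sum1 xi_exact.
have xi_mean0 := cubature_mean0 xi_exact deg_ge2.
have xi_cov := cubature_covariance xi_exact deg_ge2.
have coef_lip t x y a : 0 <= t <= T -> A a ->
    enorm (mu t x a - mu t y a) + fnorm (sigma t x a - sigma t y a)
    <= C0 * enorm (x - y).
  by move=> t_itv Aa; have := coef_holder t t x y a t_itv t_itv Aa;
    rewrite subrr normr0 sqrtr0 addr0.
have psi_lip_abs x y : `|psi x - psi y| <= `|L| * enorm (x - y).
  by apply: le_trans (psi_lip x y) _; rewrite ler_wpM2r ?enorm_ge0 ?ler_norm.
set K := 1 + C0 ^+ 2 + T * C0 ^+ 2 + `|gauss_moment 2| * C0 ^+ 2.
exists (T * (`|L| * expR (K * T))); split.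
  by apply: mulr_ge0; [exact: ltW | rewrite mulr_ge0 ?expR_ge0].
move=> N dx N_gt0 dx_gt0 n m n_le.
have h_le : T / N%:R <= T.
  by apply: ler_piMr; [exact: ltW | rewrite invf_le1 ?ler1n ?ltr0n].
have K_ge : 1 + C0 ^+ 2 + T / N%:R * C0 ^+ 2 + `|gauss_moment 2| * C0 ^+ 2 <= K.
  by rewrite lerD2r lerD2l ler_wpM2r ?sqr_ge0.
have := vhat_Vgrid_rev_error T_gt0 N_gt0 lam_ge0 lam_sum1 xi_mean0 xi_cov coef_lip
  (normr_ge0 L) psi_lip_abs K_ge dx dx_gt0 _ (leq_subr n N) m.
move/le_trans; apply.
set Lmax := `|L| * expR (K * T).
have -> : T * Lmax * enorm dx / (T / N%:R) = N%:R * Lmax * enorm dx.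
  by field; rewrite pnatr_eq0 -lt0n N_gt0 gt_eqF.
by rewrite ler_wpM2r ?enorm_ge0 // ler_wpM2r ?mulr_ge0 ?expR_ge0 // ler_nat leq_subr.
Qed.
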